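(* Fix $x_0\in(-2,2)$ and $0<\alpha<1$. Let $N\in\mathbb{N}$, $\eta_1,\dots,\eta_N\in\mathbb{C}$ with $\operatorname{Im}\eta_j>0$, $c_1,\dots,c_N\in\mathbb{R}$, $\lambda_j=x_0+\eta_j/n^\alpha$ and $\phi^{(n)}=\frac{1}{n^\alpha}\sum_{j=1}^Nc_ja_{\lambda_j}$. Then $$\lim_{n\to\infty}\operatorname{Tr}H(\phi^{(n)})H(\tilde\phi^{(n)})=-\frac12\sum_{i,j=1}^Nc_ic_j\operatorname{Re}\frac{1}{(\eta_i-\overline{\eta_j})^2},$$ uniformly for $c_j$ in compact subsets of $\mathbb{R}$ and $\eta_j$ in compact subsets of the upper half-plane.
   Context: $\omega(\lambda)=\frac{\lambda-\sqrt{\lambda^2-4}}{2}$ on $\mathbb{C}\setminus[-2,2]$, branch analytic there with $\omega(\lambda)=O(1/\lambda)$ at infinity. For $\operatorname{Im}\lambda>0$, $a_\lambda(z)=\sum_{j\in\mathbb{Z}}\operatorname{Im}\left(\frac{\omega(\lambda)^{|j|}}{\omega(\lambda)-\omega(\lambda)^{-1}}\right)z^j$. For a Laurent series $\phi=\sum\phi_kz^k$, $H(\phi)_{j,k}=\phi_{j+k-1}$ ($j,k\ge1$) is the Hankel matrix and $\tilde\phi(z)=\phi(1/z)$. *)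

From Stdlib Require Import Reals ZArith List ClassicalEpsilon.
Open Scope R_scope.

Definition Cplx := (R * R)%type.
Definition Re (z : Cplx) : R := fst z.
Definition Im (z : Cplx) : R := snd z.
Definition RtoC (x : R) : Cplx := (x, 0).
Definition Cadd (z w : Cplx) : Cplx := (Re z + Re w, Im z + Im w).
Definition Copp (z : Cplx) : Cplx := (- Re z, - Im z).
Definition Csub (z w : Cplx) : Cplx := Cadd z (Copp w).
Definition Cmul (z w : Cplx) : Cplx :=
  (Re z * Re w - Im z * Im w, Re z * Im w + Im z * Re w).
Definition Cnorm2 (z : Cplx) : R := Re z * Re z + Im z * Im z.
Definition Cinv (z : Cplx) : Cplx := (Re z / Cnorm2 z, - Im z / Cnorm2 z).
Definition Cdiv (z w : Cplx) : Cplx := Cmul z (Cinv w).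
Definition Cconj (z : Cplx) : Cplx := (Re z, - Im z).
Definition Cscale (r : R) (z : Cplx) : Cplx := (r * Re z, r * Im z).
Fixpoint Cpow (z : Cplx) (n : nat) : Cplx :=
  match n with O => (1, 0) | S m => Cmul z (Cpow z m) end.

(* omega(lambda) = (lambda - sqrt(lambda^2-4))/2, the branch on C \ [-2,2]
   with omega = O(1/lambda) at infinity.  It is the root of
   w^2 - lambda w + 1 = 0 lying in the open unit disc (the other root is 1/w).
   We define it as that root (chosen by epsilon; unique for lambda off [-2,2]). *)
Definition omega_spec (l w : Cplx) : Prop :=
  Cadd (Csub (Cmul w w) (Cmul l w)) (1, 0) = (0, 0) /\ Cnorm2 w < 1.
Definition omega (l : Cplx) : Cplx := epsilon (inhabits (0, 0)) (omega_spec l).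

Definition a_coef (l : Cplx) (j : Z) : R :=
  let w := omega l in Im (Cdiv (Cpow w (Z.abs_nat j)) (Csub w (Cinv w))).

Definition fsum (N : nat) (f : nat -> R) : R :=
  fold_right Rplus 0 (map f (seq 0 N)).

(* Tr H(phi) H(tilde phi) = t, with H(phi)_{j,k} = phi_{j+k-1} (j,k >= 1),
   tilde phi_m = phi_{-m}; indices shifted to start at 0:
   the diagonal entry j of the product is sum_k H(phi)_{j,k} H(tilde phi)_{k,j}
   and the trace is the sum of the diagonal entries (both as convergent series). *)
Definition hankel_trace_is (phi : Z -> R) (t : R) : Prop :=
  exists d : nat -> R,
    (forall j : nat,
        infinite_sum
          (fun k : nat => phi (Z.of_nat (j + k + 1)) * phi (- Z.of_nat (k + j + 1))%Z)
          (d j)) /\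
    infinite_sum d t.

Definition phi_n (x0 alpha : R) (N : nat) (c : nat -> R) (eta : nat -> Cplx)
  (n : nat) (k : Z) : R :=
  / Rpower (INR n) alpha *
  fsum N (fun j => c j * a_coef (Cadd (RtoC x0) (Cscale (/ Rpower (INR n) alpha) (eta j))) k).

Definition limit_value (N : nat) (c : nat -> R) (eta : nat -> Cplx) : R :=
  - (1/2) * fsum N (fun i => fsum N (fun j =>
      c i * c j * Re (Cinv (Cpow (Csub (eta i) (Cconj (eta j))) 2)))).

(* Write w_j = omega(lambda_j) and beta(w) = 1/(w - 1/w), so that the Laurent
   coefficients of a_lambda are Im (beta(w) w^|m|).  Since Im A Im B =
   (Re (A conj B) - Re (A B))/2, the Hankel trace of phi^(n) is a finite
   combination of double geometric series, which sum in closed form to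
   beta(u) beta(v) uv/(1-uv)^2 with (u,v) = (w_i, conj w_l) or (w_i, w_l).
   As n grows, lambda_j tends to x0 and every w_j stays in a small disc around
   the boundary value (x0 - i sqrt(4 - x0^2))/2 of omega.  There the second
   kernel is bounded, while the first one has a double pole on the diagonal
   which is exactly cancelled by -1/(lambda_i - conj lambda_l)^2; after this
   cancellation it is bounded as well.  Since phi^(n) carries the factor
   n^-alpha and 1/(eta_i - conj eta_l)^2 = n^-2alpha / (lambda_i - conj lambda_l)^2,
   the trace differs from the limit by O(n^-2alpha), uniformly on the given
   compact sets. *)

From Pilot Require Import Defs.
From Stdlib Require Import Reals ZArith List ClassicalEpsilon Lra Lia Psatz.
From Coquelicot Require Complex.
Open Scope R_scope.

Module HankelLimit.
Import Complex.

Lemma Cadd_eq (z w : C) : Defs.Cadd z w = (z + w)%C. Proof. reflexivity. Qed.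
Lemma Csub_eq (z w : C) : Defs.Csub z w = (z - w)%C. Proof. reflexivity. Qed.
Lemma Cmul_eq (z w : C) : Defs.Cmul z w = (z * w)%C. Proof. reflexivity. Qed.

Lemma Cinv_eq (z : C) : Defs.Cinv z = (/ z)%C.
Proof.
  destruct z as [a b]; unfold Defs.Cinv, Defs.Cnorm2, Cinv; simpl.
  replace (a * (a * 1) + b * (b * 1)) with (a * a + b * b) by ring. reflexivity.
Qed.

Lemma Cdiv_eq (z w : C) : Defs.Cdiv z w = (z / w)%C.
Proof. unfold Defs.Cdiv, Cdiv. rewrite Cinv_eq. reflexivity. Qed.

Lemma Cpow_eq (z : C) (n : nat) : Defs.Cpow z n = (z ^ n)%C.
Proof. induction n as [|n IH]; simpl; [reflexivity | rewrite IH; reflexivity]. Qed.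

Lemma Cnorm2_eq (z : C) : Defs.Cnorm2 z = Cmod z ^ 2.
Proof. rewrite Cmod2_alt. unfold Defs.Cnorm2, Defs.Re, Defs.Im, Re, Im. ring. Qed.

Lemma Cconj_inv (z : C) : Cconj (/ z) = (/ Cconj z)%C.
Proof.
  destruct z as [a b]; unfold Cconj, Cinv; simpl.
  replace (- b * (- b * 1)) with (b * (b * 1)) by ring. f_equal; unfold Rdiv; ring.
Qed.

Lemma Re_add (a b : C) : Re (a + b)%C = Re a + Re b. Proof. reflexivity. Qed.
Lemma Re_sub (a b : C) : Re (a - b)%C = Re a - Re b. Proof. reflexivity. Qed.

Lemma Cmod_le_Re_Im (z : C) : Cmod z <= Rabs (Re z) + Rabs (Im z).
Proof.
  destruct z as [a b]. unfold Cmod, Re, Im; simpl.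
  pose proof (Rabs_pos a); pose proof (Rabs_pos b).
  rewrite <- (sqrt_Rsqr (Rabs a + Rabs b)) by lra.
  apply sqrt_le_1_alt. unfold Rsqr.
  assert (Rabs a * Rabs a = a * a) by (rewrite <- Rabs_mult; apply Rabs_pos_eq; nra).
  assert (Rabs b * Rabs b = b * b) by (rewrite <- Rabs_mult; apply Rabs_pos_eq; nra).
  nra.
Qed.

Lemma Im_le_Cmod (z : C) : Rabs (Im z) <= Cmod z.
Proof.
  destruct z as [a b]. unfold Cmod, Im; simpl.
  rewrite <- sqrt_Rsqr_abs. apply sqrt_le_1_alt. unfold Rsqr. nra.
Qed.

Lemma Cmod_lt1_one_sub_neq0 (q : C) : Cmod q < 1 -> (1 - q)%C <> 0%C.
Proof.
  intros Hq E. assert (q = 1%C) by (replace q with (1 - (1 - q))%C by ring; rewrite E; ring).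
  subst q. rewrite Cmod_1 in Hq. lra.
Qed.

Lemma neq0_of_Cmod_ge (z : C) (d : R) : 0 < d -> d <= Cmod z -> z <> 0%C.
Proof. intros Hd H E. rewrite E, Cmod_0 in H. lra. Qed.

Lemma Cmod_eq_of_sq (z : C) (d : R) : 0 <= d -> Cmod z ^ 2 = d * d -> Cmod z = d.
Proof. intros Hd H. pose proof (Cmod_ge_0 z). apply Rsqr_inj; auto. unfold Rsqr. nra. Qed.

Lemma Cmod_sub_comm (a b : C) : Cmod (a - b)%C = Cmod (b - a)%C.
Proof. replace (a - b)%C with (- (b - a))%C by ring. apply Cmod_opp. Qed.

Lemma Cmod_mul_lt1 (u v : C) : Cmod u < 1 -> Cmod v < 1 -> Cmod (u * v)%C < 1.
Proof.
  intros Hu Hv. rewrite Cmod_mult. pose proof (Cmod_ge_0 u). pose proof (Cmod_ge_0 v). nra.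
Qed.

Lemma Csqrt_exists (z : C) : exists r : C, (r * r)%C = z.
Proof.
  destruct z as [a b].
  set (m := sqrt (a ^ 2 + b ^ 2)).
  assert (Hm0 : 0 <= m) by apply sqrt_pos.
  assert (Hm2 : m * m = a ^ 2 + b ^ 2) by (apply sqrt_sqrt; nra).
  assert (Ha : Rabs a <= m) by (unfold Rabs; destruct Rcase_abs; nra).
  assert (Hp : 0 <= (m + a) / 2) by (revert Ha; unfold Rabs; destruct Rcase_abs; lra).
  assert (Hq : 0 <= (m - a) / 2) by (revert Ha; unfold Rabs; destruct Rcase_abs; lra).
  set (x := sqrt ((m + a) / 2)). set (y := sqrt ((m - a) / 2)).
  assert (Hx : x * x = (m + a) / 2) by (apply sqrt_sqrt; auto).
  assert (Hy : y * y = (m - a) / 2) by (apply sqrt_sqrt; auto).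
  assert (Hx0 : 0 <= x) by apply sqrt_pos.
  assert (Hy0 : 0 <= y) by apply sqrt_pos.
  assert (Hxy : x * y = Rabs b / 2).
  { apply Rsqr_inj; [nra | apply Rmult_le_pos; [apply Rabs_pos | lra] |].
    unfold Rsqr. replace (x * y * (x * y)) with ((x * x) * (y * y)) by ring. rewrite Hx, Hy.
    replace (Rabs b / 2 * (Rabs b / 2)) with ((Rabs b * Rabs b) / 4) by field.
    rewrite <- Rabs_mult, Rabs_pos_eq by nra. nra. }
  destruct (Rle_or_lt 0 b) as [Hb | Hb].
  - exists (x, y). unfold Cmult; simpl. rewrite Rabs_pos_eq in Hxy by lra. f_equal; nra.
  - exists (x, - y). unfold Cmult; simpl. rewrite Rabs_left in Hxy by lra. f_equal; nra.
Qed.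

Lemma omega_spec_exists (l : C) : Im l <> 0 -> exists w, omega_spec l w.
Proof.
  intro Hl.
  destruct (Csqrt_exists (l * l - 4)%C) as [r Hr].
  set (w1 := ((l + r) / 2)%C). set (w2 := ((l - r) / 2)%C).
  assert (Htwo : RtoC 2 <> 0%C) by (intro E; injection E; lra).
  assert (Hprod : (w1 * w2)%C = 1%C).
  { unfold w1, w2. replace ((l + r) / 2 * ((l - r) / 2))%C with ((l * l - r * r) / 4)%C
      by (field; auto).
    rewrite Hr. field. }
  assert (Hsum : (w1 + w2)%C = l) by (unfold w1, w2; field; auto).
  assert (Hroot : forall w, w = w1 \/ w = w2 -> (w * w - l * w + 1)%C = 0%C).
  { intros w Hw. rewrite <- Hsum, <- Hprod.
    replace (w * w - (w1 + w2) * w + w1 * w2)%C with ((w - w1) * (w - w2))%C by ring.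
    destruct Hw as [-> | ->]; ring. }
  assert (Hspec : forall w, w = w1 \/ w = w2 -> Cmod w < 1 -> omega_spec l w).
  { intros w Hw Hmod. unfold omega_spec.
    rewrite Cnorm2_eq, Cadd_eq, Csub_eq, !Cmul_eq. split.
    - change (1, 0) with (RtoC 1). change (0, 0) with (RtoC 0). apply Hroot, Hw.
    - pose proof (Cmod_ge_0 w). simpl. nra. }
  assert (Hmods : Cmod w1 * Cmod w2 = 1) by (rewrite <- Cmod_mult, Hprod; apply Cmod_1).
  pose proof (Cmod_ge_0 w1). pose proof (Cmod_ge_0 w2).
  destruct (Rtotal_order (Cmod w1) 1) as [Hlt | [Heq | Hgt]].
  - exists w1. apply Hspec; auto.
  - (* on the unit circle the other root is conj w1, and then l = w1 + conj w1 is real *)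
    exfalso. apply Hl.
    assert (Hw1 : w1 <> 0%C) by (intro E; rewrite E, Cmod_0 in Heq; lra).
    assert (Hconj : (w1 * Cconj w1)%C = 1%C).
    { rewrite <- Cmod2_conj, Heq. unfold RtoC; simpl. f_equal; ring. }
    assert (Hw2 : w2 = Cconj w1).
    { replace w2 with (/ w1 * (w1 * w2))%C by (field; auto).
      rewrite Hprod, <- Hconj. field; auto. }
    rewrite <- Hsum, Hw2. destruct w1 as [a b]. simpl. ring.
  - exists w2. apply Hspec; auto. nra.
Qed.

Lemma omega_root (l : C) : Im l <> 0 ->
  (omega l * omega l - l * omega l + 1)%C = 0%C /\ Cmod (omega l) < 1.
Proof.
  intro Hl.
  assert (H : omega_spec l (omega l))
    by (unfold omega; apply epsilon_spec, omega_spec_exists, Hl).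
  unfold omega_spec in H. rewrite Cnorm2_eq, Cadd_eq, Csub_eq, !Cmul_eq in H.
  destruct H as [Hroot Hmod]. split; [exact Hroot |].
  pose proof (Cmod_ge_0 (omega l)). simpl in Hmod. nra.
Qed.

Lemma omega_neq0 (l : C) : Im l <> 0 -> (omega l : C) <> 0%C.
Proof.
  intros Hl E. destruct (omega_root l Hl) as [Hroot _]. rewrite E in Hroot.
  injection Hroot. intros. lra.
Qed.

Lemma omega_add_inv (l : C) : Im l <> 0 -> l = (omega l + / omega l)%C.
Proof.
  intro Hl. pose proof (omega_neq0 l Hl) as Hw. destruct (omega_root l Hl) as [Hroot _].
  replace (omega l + / omega l)%C
    with (l + (omega l * omega l - l * omega l + 1) / omega l)%C by (field; auto).
  rewrite Hroot. field; auto.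
Qed.

Lemma Im_omega_lt0 (l : C) : 0 < Im l -> Im (omega l) < 0.
Proof.
  intro Hl. assert (Hl0 : Im l <> 0) by lra.
  pose proof (omega_neq0 l Hl0) as Hw. destruct (omega_root l Hl0) as [_ Hmod].
  rewrite (omega_add_inv l Hl0) in Hl.
  assert (Hn : Cmod (omega l) ^ 2 < 1) by (pose proof (Cmod_ge_0 (omega l)); nra).
  assert (Hp : 0 < Cmod (omega l) ^ 2) by (apply Cmod_gt_0 in Hw; nra).
  rewrite Cmod2_alt in Hn, Hp.
  destruct (omega l) as [a b]. unfold Re, Im in *. simpl in *.
  set (rho := a * (a * 1) + b * (b * 1)) in *.
  (* Im (w + 1/w) = Im w (1 - 1/|w|^2) with 1/|w|^2 > 1 *)
  assert (Hinv : 1 < / rho).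
  { apply Rmult_lt_reg_l with rho; [lra |]. rewrite Rinv_r by lra. lra. }
  unfold Rdiv in Hl. nra.
Qed.

Definition beta (w : C) : C := / (w - / w).

Lemma a_coef_eq (l : C) (z : Z) :
  a_coef l z = Im (omega l ^ Z.abs_nat z * beta (omega l))%C.
Proof. unfold a_coef. rewrite Cdiv_eq, Cpow_eq, Csub_eq, Cinv_eq. reflexivity. Qed.

Lemma Z_abs_nat_opp_of_nat (m : nat) : Z.abs_nat (- Z.of_nat m) = m.
Proof. destruct m as [| m]; [reflexivity |]. apply SuccNat2Pos.id_succ. Qed.

(* The two boundary values of omega at x0 are omega_boundary x0 and its
   conjugate; omega_gap x0 is the distance between them. *)
Definition omega_gap (x0 : R) : R := sqrt (4 - x0 * x0).
Definition omega_boundary (x0 : R) : C := (x0 / 2, - omega_gap x0 / 2).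

Section Localisation.

Variable x0 : R.
Hypothesis Hx0 : -2 < x0 < 2.
Let D := omega_gap x0.
Let o := omega_boundary x0.

Lemma omega_gap_sq : D * D = 4 - x0 * x0.
Proof. apply sqrt_sqrt. nra. Qed.

Lemma omega_gap_pos : 0 < D.
Proof. apply sqrt_lt_R0. nra. Qed.

Lemma omega_boundary_add_conj : (o + Cconj o)%C = RtoC x0.
Proof. unfold o, omega_boundary, Cplus, Cconj, RtoC; simpl. f_equal; field. Qed.

Lemma omega_boundary_mul_conj : (o * Cconj o)%C = 1%C.
Proof.
  pose proof omega_gap_sq. unfold o, omega_boundary, Cmult, Cconj, RtoC; simpl.
  fold D. f_equal; nra.
Qed.

Lemma Cmod_omega_boundary : Cmod o = 1.
Proof.
  pose proof omega_gap_sq. apply Cmod_eq_of_sq; [lra |].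
  rewrite Cmod2_alt. unfold o, omega_boundary, Re, Im; simpl. fold D. nra.
Qed.

Lemma Cmod_one_sub_omega_boundary_sq : Cmod (1 - o * o)%C = D.
Proof.
  pose proof omega_gap_sq. pose proof omega_gap_pos. apply Cmod_eq_of_sq; [lra |].
  rewrite Cmod2_alt. unfold o, omega_boundary, Re, Im; simpl. fold D. nra.
Qed.

(* (w - o)(w - conj o) = (lambda - x0) w, and w - conj o stays away from 0
   because Im w < 0 < Im (conj o). *)
Lemma omega_dist_boundary_le (l : C) : 0 < Im l ->
  Cmod (omega l - o)%C * (D / 2) <= Cmod (l - RtoC x0)%C.
Proof.
  intro Hl. assert (Hl0 : Im l <> 0) by lra.
  destruct (omega_root l Hl0) as [Hroot Hmod]. pose proof (Im_omega_lt0 l Hl) as Him.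
  set (w := omega l) in *.
  assert (E : ((w - o) * (w - Cconj o))%C = ((l - RtoC x0) * w)%C).
  { replace ((w - o) * (w - Cconj o))%C with
      ((w * w - l * w + 1) + (l - RtoC x0) * w + (RtoC x0 - (o + Cconj o)) * w
       + (o * Cconj o - 1))%C by ring.
    rewrite Hroot, omega_boundary_add_conj, omega_boundary_mul_conj. ring. }
  apply (f_equal Cmod) in E. rewrite !Cmod_mult in E.
  assert (Hfar : D / 2 <= Cmod (w - Cconj o)%C).
  { eapply Rle_trans; [| apply Im_le_Cmod].
    unfold o, omega_boundary, Cconj, Cminus, Cplus, Copp, Im in *; simpl in *.
    pose proof omega_gap_pos. rewrite Rabs_left; fold D; lra. }
  pose proof (Cmod_ge_0 (w - o)%C). pose proof (Cmod_ge_0 (l - RtoC x0)%C).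
  apply Rle_trans with (Cmod (w - o)%C * Cmod (w - Cconj o)%C);
    [apply Rmult_le_compat_l; auto | rewrite E; nra].
Qed.

Lemma omega_near_boundary (l : C) : 0 < Im l -> Cmod (l - RtoC x0)%C <= D * D / 8 ->
  Cmod (omega l - o)%C <= D / 4 /\ Im (omega l) <= - (D / 4).
Proof.
  intros Hl Hnear. pose proof (omega_dist_boundary_le l Hl). pose proof omega_gap_pos.
  assert (Hdist : Cmod (omega l - o)%C <= D / 4)
    by (apply Rmult_le_reg_r with (D / 2); nra).
  split; [exact Hdist |].
  assert (Him : Im (omega l - o)%C = Im (omega l) + D / 2)
    by (unfold o, omega_boundary, D, Im; simpl; field).
  pose proof (Im_le_Cmod (omega l - o)%C). pose proof (Rle_abs (Im (omega l - o)%C)).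
  lra.
Qed.

(* |1 - w1 w2| is within D/2 of |1 - o^2| = D *)
Lemma one_sub_mul_near_boundary_ge (w1 w2 : C) :
  Cmod (w1 - o)%C <= D / 4 -> Cmod (w2 - o)%C <= D / 4 -> Cmod w1 <= 1 ->
  D / 2 <= Cmod (1 - w1 * w2)%C.
Proof.
  intros H1 H2 Hw1.
  pose proof (Cmod_triangle (1 - w1 * w2)%C (w1 * (w2 - o) + o * (w1 - o))%C) as Htri.
  replace (1 - w1 * w2 + (w1 * (w2 - o) + o * (w1 - o)))%C with (1 - o * o)%C in Htri
    by ring.
  pose proof (Cmod_triangle (w1 * (w2 - o))%C (o * (w1 - o))%C).
  rewrite Cmod_one_sub_omega_boundary_sq in Htri.
  rewrite !Cmod_mult, Cmod_omega_boundary in H.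
  pose proof (Cmod_ge_0 w1). pose proof (Cmod_ge_0 (w2 - o)%C). nra.
Qed.

Lemma one_sub_omega_mul_ge (p q : C) : 0 < Im p -> 0 < Im q ->
  Cmod (p - RtoC x0)%C <= D * D / 8 -> Cmod (q - RtoC x0)%C <= D * D / 8 ->
  D / 2 <= Cmod (1 - omega p * omega q)%C.
Proof.
  intros Hp Hq Hp_near Hq_near.
  destruct (omega_near_boundary p Hp Hp_near) as [Hp_dist _].
  destruct (omega_near_boundary q Hq Hq_near) as [Hq_dist _].
  apply one_sub_mul_near_boundary_ge; auto.
  left. apply omega_root. lra.
Qed.

End Localisation.

Definition hankel_kernel (u v : C) : C :=
  (beta u * beta v * (u * v) / ((1 - u * v) * (1 - u * v)))%C.

Lemma hankel_kernel_eq (u v : C) :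
  u <> 0%C -> v <> 0%C -> (u * u - 1)%C <> 0%C -> (v * v - 1)%C <> 0%C ->
  (1 - u * v)%C <> 0%C ->
  hankel_kernel u v =
  ((u * v) * (u * v) / ((u * u - 1) * (v * v - 1) * (1 - u * v) * (1 - u * v)))%C.
Proof. intros. unfold hankel_kernel, beta. field. repeat split; auto. Qed.

(* The double pole of the kernel at u v = 1 is that of
   -1/(lambda - mu)^2, with lambda = u + 1/u and mu = v + 1/v. *)
Lemma hankel_kernel_add_inv_sq (u v : C) :
  u <> 0%C -> v <> 0%C -> (u * u - 1)%C <> 0%C -> (v * v - 1)%C <> 0%C ->
  (1 - u * v)%C <> 0%C -> (u - v)%C <> 0%C ->
  (hankel_kernel u v + / (((u + / u) - (v + / v)) * ((u + / u) - (v + / v))))%C =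
  ((u * v) * (u * v) / ((u - v) * (u - v) * (u * u - 1) * (v * v - 1)))%C.
Proof.
  intros Hu Hv Huu Hvv Huv Hd. unfold hankel_kernel, beta. field.
  repeat split; auto.
  replace ((u * u + 1) * v - (v * v + 1) * u)%C with ((u - v) * - (1 - u * v))%C by ring.
  apply Cmult_neq_0; auto. intro E. apply Huv.
  replace (1 - u * v)%C with (- - (1 - u * v))%C by ring. rewrite E. ring.
Qed.

Lemma Cmod_div_prod4_le (a b1 b2 b3 b4 : C) (d : R) : 0 < d -> Cmod a <= 1 ->
  d <= Cmod b1 -> d <= Cmod b2 -> d <= Cmod b3 -> d <= Cmod b4 ->
  Cmod (a / (b1 * b2 * b3 * b4))%C <= / d ^ 4.
Proof.
  intros Hd Ha H1 H2 H3 H4.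
  assert (Hprod : d ^ 4 <= Cmod b1 * Cmod b2 * Cmod b3 * Cmod b4).
  { replace (d ^ 4) with (d * d * d * d) by ring.
    repeat apply Rmult_le_compat; try lra; repeat apply Rmult_le_pos; lra. }
  assert (Hd4 : 0 < d ^ 4) by (apply pow_lt; lra).
  assert (Hnz : (b1 * b2 * b3 * b4)%C <> 0%C)
    by (apply Cmod_gt_0; rewrite !Cmod_mult; lra).
  rewrite Cmod_div, !Cmod_mult by auto. pose proof (Cmod_ge_0 a).
  unfold Rdiv. rewrite <- (Rmult_1_l (/ d ^ 4)).
  apply Rmult_le_compat; try lra; [left; apply Rinv_0_lt_compat; lra |].
  apply Rinv_le_contravar; lra.
Qed.

Section KernelBounds.

Variable x0 : R.
Hypothesis Hx0 : -2 < x0 < 2.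
Let D := omega_gap x0.
Variables l m : C.
Hypotheses (Hl : 0 < Im l) (Hm : 0 < Im m).
Hypotheses (Hl_near : Cmod (l - RtoC x0)%C <= D * D / 8)
           (Hm_near : Cmod (m - RtoC x0)%C <= D * D / 8).
Let u : C := omega l.
Let v : C := omega m.

Let D_half_pos : 0 < D / 2.
Proof. pose proof (omega_gap_pos x0 Hx0). unfold D. lra. Qed.

Let u_neq0 : u <> 0%C.
Proof. apply omega_neq0. lra. Qed.

Let v_neq0 : v <> 0%C.
Proof. apply omega_neq0. lra. Qed.

Let Cmod_u_lt1 : Cmod u < 1.
Proof. apply omega_root. lra. Qed.

Let Cmod_v_lt1 : Cmod v < 1.
Proof. apply omega_root. lra. Qed.

Let u_sq_sub1_ge : D / 2 <= Cmod (u * u - 1)%C.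
Proof. rewrite Cmod_sub_comm. apply one_sub_omega_mul_ge; auto. Qed.

Let v_sq_sub1_ge : D / 2 <= Cmod (v * v - 1)%C.
Proof. rewrite Cmod_sub_comm. apply one_sub_omega_mul_ge; auto. Qed.

Lemma hankel_kernel_bound : Cmod (hankel_kernel u v) <= / (D / 2) ^ 4.
Proof.
  assert (Huv : D / 2 <= Cmod (1 - u * v)%C) by (apply one_sub_omega_mul_ge; auto).
  rewrite hankel_kernel_eq; auto; try (apply (neq0_of_Cmod_ge _ (D / 2)); auto).
  apply Cmod_div_prod4_le; auto. left. auto using Cmod_mul_lt1.
Qed.

Lemma hankel_kernel_conj_bound :
  Cmod (hankel_kernel u (Cconj v) + / ((l - Cconj m) * (l - Cconj m)))%C <= / (D / 2) ^ 4.
Proof.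
  set (v' := Cconj v).
  assert (Hv'0 : v' <> 0%C)
    by (apply Cmod_gt_0; unfold v'; rewrite Cmod_conj; apply Cmod_gt_0, v_neq0).
  assert (Hv'1 : Cmod v' < 1) by (unfold v'; rewrite Cmod_conj; exact Cmod_v_lt1).
  assert (Hv'v' : D / 2 <= Cmod (v' * v' - 1)%C).
  { replace (v' * v' - 1)%C with (Cconj (v * v - 1)).
    - rewrite Cmod_conj. exact v_sq_sub1_ge.
    - unfold v'. destruct v as [a b].
      unfold Cconj, Cmult, Cminus, Cplus, Copp, RtoC; simpl. f_equal; ring. }
  (* u and conj v lie in opposite half-planes, at distance at least D/4 from the real axis *)
  assert (Huv' : D / 2 <= Cmod (u - v')%C).
  { destruct (omega_near_boundary x0 Hx0 l Hl Hl_near) as [_ Hu_im].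
    destruct (omega_near_boundary x0 Hx0 m Hm Hm_near) as [_ Hv_im].
    fold u v D in Hu_im, Hv_im.
    eapply Rle_trans; [| apply Im_le_Cmod].
    replace (Im (u - v')%C) with (Im u + Im v)
      by (unfold v'; destruct u, v; unfold Cminus, Cplus, Copp, Cconj, Im; simpl; ring).
    rewrite Rabs_left; lra. }
  assert (Hlm : (l - Cconj m)%C = ((u + / u) - (v' + / v'))%C).
  { rewrite (omega_add_inv l) at 1 by lra. rewrite (omega_add_inv m) at 1 by lra.
    unfold v'. rewrite Cplus_conj, Cconj_inv. reflexivity. }
  rewrite Hlm, hankel_kernel_add_inv_sq; auto using Cmod_lt1_one_sub_neq0, Cmod_mul_lt1;
    try (apply (neq0_of_Cmod_ge _ (D / 2)); auto).
  apply Cmod_div_prod4_le; auto. left. auto using Cmod_mul_lt1.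
Qed.

End KernelBounds.

Lemma fsum_S (N : nat) (f : nat -> R) : fsum (S N) f = fsum N f + f N.
Proof.
  unfold fsum. rewrite seq_S, map_app, fold_right_app. simpl.
  induction (map f (seq 0 N)) as [| a s IH]; simpl; [ring | rewrite IH; ring].
Qed.

Lemma fsum_ext (N : nat) (f g : nat -> R) :
  (forall i, (i < N)%nat -> f i = g i) -> fsum N f = fsum N g.
Proof.
  induction N as [| N IH]; intro H; [reflexivity |].
  rewrite !fsum_S, IH, H; [reflexivity | lia | intros i Hi; apply H; lia].
Qed.

Lemma fsum_scal (N : nat) (r : R) (f : nat -> R) :
  r * fsum N f = fsum N (fun i => r * f i).
Proof. induction N as [| N IH]; [unfold fsum; simpl; ring |]. rewrite !fsum_S, <- IH. ring. Qed.

Lemma fsum_minus (N : nat) (f g : nat -> R) :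
  fsum N f - fsum N g = fsum N (fun i => f i - g i).
Proof. induction N as [| N IH]; [unfold fsum; simpl; ring |]. rewrite !fsum_S, <- IH. ring. Qed.

Lemma fsum_mul (N : nat) (f g : nat -> R) :
  fsum N f * fsum N g = fsum N (fun i => fsum N (fun l => f i * g l)).
Proof.
  rewrite Rmult_comm, fsum_scal. apply fsum_ext. intros i _.
  rewrite Rmult_comm, fsum_scal. reflexivity.
Qed.

Lemma fsum_abs_le (N : nat) (f : nat -> R) (B : R) :
  (forall i, (i < N)%nat -> Rabs (f i) <= B) -> Rabs (fsum N f) <= INR N * B.
Proof.
  induction N as [| N IH]; intro H.
  - unfold fsum; simpl. rewrite Rabs_R0. lra.
  - rewrite fsum_S, S_INR. eapply Rle_trans; [apply Rabs_triang |].
    pose proof (IH (fun i Hi => H i ltac:(lia))). pose proof (H N ltac:(lia)). lra.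
Qed.

Lemma infinite_sum_ext (f g : nat -> R) (l : R) :
  (forall k, f k = g k) -> infinite_sum f l -> infinite_sum g l.
Proof. intros E. apply Un_cv_ext. intro n. apply sum_eq. auto. Qed.

Lemma infinite_sum_plus (f g : nat -> R) (a b : R) :
  infinite_sum f a -> infinite_sum g b -> infinite_sum (fun k => f k + g k) (a + b).
Proof.
  intros Hf Hg. apply (Un_cv_ext (fun n => sum_f_R0 f n + sum_f_R0 g n)).
  - intro n. symmetry. apply plus_sum.
  - exact (CV_plus _ _ _ _ Hf Hg).
Qed.

Lemma infinite_sum_minus (f g : nat -> R) (a b : R) :
  infinite_sum f a -> infinite_sum g b -> infinite_sum (fun k => f k - g k) (a - b).
Proof.
  intros Hf Hg. apply (Un_cv_ext (fun n => sum_f_R0 f n - sum_f_R0 g n)).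
  - intro n. symmetry. apply minus_sum.
  - exact (CV_minus _ _ _ _ Hf Hg).
Qed.

Lemma Un_cv_const (r : R) : Un_cv (fun _ => r) r.
Proof. intros eps Heps. exists 0%nat. intros. rewrite Rdist_eq. lra. Qed.

Lemma infinite_sum_0 : infinite_sum (fun _ => 0) 0.
Proof.
  apply (Un_cv_ext (fun _ => 0)); [| apply Un_cv_const].
  induction n as [| n IH]; simpl; lra.
Qed.

Lemma infinite_sum_scal (r : R) (f : nat -> R) (l : R) :
  infinite_sum f l -> infinite_sum (fun k => r * f k) (r * l).
Proof.
  intro H. apply (Un_cv_ext (fun n => r * sum_f_R0 f n)).
  - intro n. rewrite scal_sum. apply sum_eq. intros. ring.
  - exact (CV_mult _ _ _ _ (Un_cv_const r) H).
Qed.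

Lemma Un_cv_Re_mul_pow (Y q : C) : Cmod q < 1 -> Un_cv (fun n => Re (Y * q ^ n)%C) 0.
Proof.
  intros Hq eps Heps. pose proof (Cmod_ge_0 Y) as HY. pose proof (Cmod_ge_0 q).
  destruct (pow_lt_1_zero (Cmod q)) with (y := eps / (Cmod Y + 1)) as [n0 Hn0];
    [rewrite Rabs_pos_eq; lra | apply Rdiv_lt_0_compat; lra |].
  exists n0. intros n Hn. unfold Rdist. rewrite Rminus_0_r.
  eapply Rle_lt_trans; [apply re_le_Cmod |]. rewrite Cmod_mult, Cmod_pow.
  specialize (Hn0 n Hn). rewrite Rabs_pos_eq in Hn0 by (apply pow_le; lra).
  assert (0 <= Cmod q ^ n) by (apply pow_le; lra).
  apply Rle_lt_trans with ((Cmod Y + 1) * Cmod q ^ n); [nra |].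
  apply Rmult_lt_compat_l with (r := Cmod Y + 1) in Hn0; [| lra].
  replace ((Cmod Y + 1) * (eps / (Cmod Y + 1))) with eps in Hn0 by (field; lra). exact Hn0.
Qed.

Lemma infinite_sum_Re_geom (Z q : C) : Cmod q < 1 ->
  infinite_sum (fun k => Re (Z * q ^ k)%C) (Re (Z / (1 - q))%C).
Proof.
  intro Hq. pose proof (Cmod_lt1_one_sub_neq0 q Hq) as Hq1.
  apply (Un_cv_ext (fun n => Re (Z / (1 - q))%C - Re (Z / (1 - q) * q ^ S n)%C)).
  - intro n. induction n as [| n IH].
    + cbn [sum_f_R0]. rewrite <- Re_sub, Cpow_1_r. f_equal. cbn [Cpow]. field; auto.
    + rewrite tech5, <- IH, <- !Re_sub, <- Re_add. f_equal.
      rewrite (Cpow_S q (S n)). field; auto.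
  - assert (Htail : Un_cv (fun n => Re (Z / (1 - q) * q ^ S n)%C) 0).
    { apply (Un_cv_ext (fun n => Re (Z / (1 - q) * q * q ^ n)%C)).
      - intro n. rewrite Cpow_S. f_equal. ring.
      - apply Un_cv_Re_mul_pow, Hq. }
    pose proof (CV_minus _ _ _ _ (Un_cv_const (Re (Z / (1 - q))%C)) Htail) as H.
    rewrite Rminus_0_r in H. exact H.
Qed.

(* The trace of H(phi) H(tilde phi) is the double series
   sum_j sum_k g (j + k + 1) with g m = phi m phi (-m). *)
Definition hankel_sum (g : nat -> R) (t : R) : Prop :=
  exists d : nat -> R,
    (forall j, infinite_sum (fun k => g (j + k + 1)%nat) (d j)) /\ infinite_sum d t.

Lemma hankel_trace_is_of_sum (phi : Z -> R) (t : R) :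
  hankel_sum (fun m => phi (Z.of_nat m) * phi (- Z.of_nat m)%Z) t -> hankel_trace_is phi t.
Proof.
  intros [d [Hd Ht]]. exists d. split; [| exact Ht].
  intro j.
  apply (infinite_sum_ext (fun k => phi (Z.of_nat (j + k + 1)) * phi (- Z.of_nat (j + k + 1))%Z));
    [intro k; rewrite (Nat.add_comm k j); reflexivity | exact (Hd j)].
Qed.

Lemma hankel_sum_ext (g h : nat -> R) (t : R) :
  (forall m, g m = h m) -> hankel_sum g t -> hankel_sum h t.
Proof.
  intros E [d [Hd Ht]]. exists d. split; [| exact Ht].
  intro j. apply (infinite_sum_ext _ _ _ (fun k => E _) (Hd j)).
Qed.

Lemma hankel_sum_plus (g h : nat -> R) (a b : R) :
  hankel_sum g a -> hankel_sum h b -> hankel_sum (fun m => g m + h m) (a + b).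
Proof.
  intros [d [Hd Ha]] [e [He Hb]]. exists (fun j => d j + e j).
  split; [intro j; apply infinite_sum_plus; auto | apply infinite_sum_plus; auto].
Qed.

Lemma hankel_sum_minus (g h : nat -> R) (a b : R) :
  hankel_sum g a -> hankel_sum h b -> hankel_sum (fun m => g m - h m) (a - b).
Proof.
  intros [d [Hd Ha]] [e [He Hb]]. exists (fun j => d j - e j).
  split; [intro j; apply infinite_sum_minus; auto | apply infinite_sum_minus; auto].
Qed.

Lemma hankel_sum_scal (r : R) (g : nat -> R) (t : R) :
  hankel_sum g t -> hankel_sum (fun m => r * g m) (r * t).
Proof.
  intros [d [Hd Ht]]. exists (fun j => r * d j).
  split; [intro j; apply infinite_sum_scal; auto | apply infinite_sum_scal; auto].
Qed.

Lemma hankel_sum_fsum (N : nat) (G : nat -> nat -> R) (T : nat -> R) :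
  (forall i, (i < N)%nat -> hankel_sum (G i) (T i)) ->
  hankel_sum (fun m => fsum N (fun i => G i m)) (fsum N T).
Proof.
  induction N as [| N IH]; intro H.
  - exists (fun _ => 0). split; [intro j |]; exact infinite_sum_0.
  - rewrite fsum_S.
    apply (hankel_sum_ext (fun m => fsum N (fun i => G i m) + G N m));
      [intro m; rewrite fsum_S; reflexivity |].
    apply hankel_sum_plus; [apply IH; intros i Hi |]; apply H; lia.
Qed.

Lemma hankel_sum_Re_geom (Z q : C) : Cmod q < 1 ->
  hankel_sum (fun m => Re (Z * q ^ m)%C) (Re (Z * q / ((1 - q) * (1 - q)))%C).
Proof.
  intro Hq. pose proof (Cmod_lt1_one_sub_neq0 q Hq) as Hq1.
  exists (fun j => Re (Z * q / (1 - q) * q ^ j)%C). split.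
  - intro j. apply (infinite_sum_ext (fun k => Re (Z * q ^ S j * q ^ k)%C)).
    + intro k. replace (j + k + 1)%nat with (S j + k)%nat by lia.
      rewrite Cpow_add_r. f_equal. ring.
    + replace (Re (Z * q / (1 - q) * q ^ j)%C) with (Re (Z * q ^ S j / (1 - q))%C)
        by (f_equal; rewrite Cpow_S; field; auto).
      apply infinite_sum_Re_geom, Hq.
  - replace (Re (Z * q / ((1 - q) * (1 - q)))%C) with (Re (Z * q / (1 - q) / (1 - q))%C)
      by (f_equal; field; auto).
    apply infinite_sum_Re_geom, Hq.
Qed.

Lemma Im_mul_Im (A B : C) : Im A * Im B = (Re (A * Cconj B)%C - Re (A * B)%C) / 2.
Proof. destruct A as [a1 a2], B as [b1 b2]. unfold Re, Im, Cmult, Cconj; simpl. field. Qed.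

Lemma Cconj_beta (w : C) : Cconj (beta w) = beta (Cconj w).
Proof. unfold beta. rewrite Cconj_inv, Cminus_conj, Cconj_inv. reflexivity. Qed.

Lemma Im_pow_beta_mul (u v : C) (m : nat) :
  Im (u ^ m * beta u)%C * Im (v ^ m * beta v)%C =
  (Re (beta u * beta (Cconj v) * (u * Cconj v) ^ m)%C
   - Re (beta u * beta v * (u * v) ^ m)%C) / 2.
Proof.
  rewrite Im_mul_Im, Cmult_conj, Cpow_conj, Cconj_beta, !Cpow_mult_l.
  f_equal. f_equal; f_equal; ring.
Qed.

Definition trace_value (N : nat) (c : nat -> R) (r : R) (w : nat -> C) : R :=
  fsum N (fun i => fsum N (fun l => r * r / 2 * (c i * c l) *
    (Re (hankel_kernel (w i) (Cconj (w l))) - Re (hankel_kernel (w i) (w l))))).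

Lemma hankel_trace_a_combination (N : nat) (c : nat -> R) (r : R) (lam : nat -> C) :
  (forall j, (j < N)%nat -> 0 < Im (lam j)) ->
  hankel_trace_is (fun k => r * fsum N (fun j => c j * a_coef (lam j) k))
    (trace_value N c r (fun j => omega (lam j))).
Proof.
  intro Hlam. set (w := fun j => (omega (lam j) : C)).
  assert (Hw : forall j, (j < N)%nat -> Cmod (w j) < 1)
    by (intros j Hj; apply omega_root; specialize (Hlam j Hj); lra).
  assert (Hcoef : forall z, fsum N (fun j => c j * a_coef (lam j) z)
                          = fsum N (fun j => c j * Im (w j ^ Z.abs_nat z * beta (w j))%C))
    by (intro z; apply fsum_ext; intros j _; rewrite a_coef_eq; reflexivity).
  apply hankel_trace_is_of_sum.
  apply (hankel_sum_ext (fun m => fsum N (fun i => fsum N (fun l => r * r / 2 * (c i * c l) *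
     (Re (beta (w i) * beta (Cconj (w l)) * (w i * Cconj (w l)) ^ m)%C
      - Re (beta (w i) * beta (w l) * (w i * w l) ^ m)%C))))).
  - intro m. cbv beta. rewrite !Hcoef, Z_abs_nat_opp_of_nat, Zabs2Nat.id.
    set (F := fsum N (fun j => c j * Im (w j ^ m * beta (w j))%C)).
    replace (r * F * (r * F)) with (r * r * (F * F)) by ring.
    unfold F. rewrite fsum_mul, fsum_scal.
    apply fsum_ext. intros i _. rewrite fsum_scal. apply fsum_ext. intros l _.
    replace (r * r * (c i * Im (w i ^ m * beta (w i))%C * (c l * Im (w l ^ m * beta (w l))%C)))
      with (r * r * (c i * c l) * (Im (w i ^ m * beta (w i))%C * Im (w l ^ m * beta (w l))%C))
      by ring.
    rewrite Im_pow_beta_mul. field.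
  - apply hankel_sum_fsum. intros i Hi. apply hankel_sum_fsum. intros l Hl.
    apply hankel_sum_scal, hankel_sum_minus; apply hankel_sum_Re_geom, Cmod_mul_lt1;
      try rewrite Cmod_conj; auto.
Qed.

Definition scaled_point (x0 s : R) (e : C) : C :=
  Defs.Cadd (Defs.RtoC x0) (Defs.Cscale (/ s) e).

Lemma scaled_point_eq (x0 s : R) (e : C) :
  scaled_point x0 s e = (RtoC x0 + RtoC (/ s) * e)%C.
Proof.
  destruct e as [a b].
  unfold scaled_point, Defs.Cadd, Defs.Cscale, Defs.RtoC, Cplus, Cmult, RtoC.
  apply injective_projections; simpl; ring.
Qed.

Lemma scaled_point_near (x0 s M : R) (e : C) : -2 < x0 < 2 -> 0 < M ->
  16 * M / (omega_gap x0 * omega_gap x0) <= s -> Rabs (Re e) <= M -> / M <= Im e <= M ->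
  0 < Im (scaled_point x0 s e) /\
  Cmod (scaled_point x0 s e - RtoC x0)%C <= omega_gap x0 * omega_gap x0 / 8.
Proof.
  intros Hx HM Hs HRe HIm. pose proof (omega_gap_pos x0 Hx) as HD.
  set (D := omega_gap x0) in *.
  assert (HDD : 0 < D * D) by nra.
  assert (Hs0 : 0 < s) by (eapply Rlt_le_trans; [| exact Hs]; apply Rdiv_lt_0_compat; lra).
  assert (HMinv : 0 < / M) by (apply Rinv_0_lt_compat; lra).
  assert (Hsinv : 0 < / s) by (apply Rinv_0_lt_compat; lra).
  rewrite scaled_point_eq. split.
  - destruct e as [a b]. unfold Im, Cplus, Cmult, RtoC in *; simpl in *. nra.
  - replace (RtoC x0 + RtoC (/ s) * e - RtoC x0)%C with (RtoC (/ s) * e)%C by ring.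
    rewrite Cmod_mult, Cmod_R, Rabs_pos_eq by lra.
    assert (He : Cmod e <= 2 * M).
    { pose proof (Cmod_le_Re_Im e). rewrite (Rabs_pos_eq (Im e)) in H by lra. lra. }
    apply Rle_trans with (/ s * (2 * M)); [apply Rmult_le_compat_l; lra |].
    apply Rmult_le_reg_l with s; [lra |]. rewrite <- Rmult_assoc, Rinv_r, Rmult_1_l by lra.
    apply Rmult_le_reg_l with (16 / (D * D)); [apply Rdiv_lt_0_compat; lra |].
    replace (16 / (D * D) * (s * (D * D / 8))) with (2 * s) by (field; lra).
    replace (16 / (D * D) * (2 * M)) with (2 * (16 * M / (D * D))) by (field; lra). lra.
Qed.

Lemma Re_RtoC_mul (r : R) (z : C) : Re (RtoC r * z)%C = r * Re z.
Proof. destruct z. unfold Re, RtoC, Cmult; simpl. ring. Qed.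

(* eta_i - conj eta_l = s (lambda_i - conj lambda_l) *)
Lemma inv_sq_sub_conj_scaled (x0 s : R) (e1 e2 : C) : 0 < s ->
  0 < Im (scaled_point x0 s e1) -> 0 < Im (scaled_point x0 s e2) ->
  Re (Defs.Cinv (Defs.Cpow (Defs.Csub e1 (Defs.Cconj e2)) 2)) =
  / (s * s) * Re (/ ((scaled_point x0 s e1 - Cconj (scaled_point x0 s e2))
                     * (scaled_point x0 s e1 - Cconj (scaled_point x0 s e2))))%C.
Proof.
  intros Hs H1 H2. rewrite Cinv_eq, Cpow_eq, Csub_eq, <- Re_RtoC_mul. f_equal.
  set (X := (scaled_point x0 s e1 - Cconj (scaled_point x0 s e2))%C).
  assert (HX : X <> 0%C).
  { intro E. assert (Im X = 0) by (rewrite E; reflexivity).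
    unfold X, Cminus, Cplus, Copp, Cconj, Im in *; simpl in *. lra. }
  assert (Hsc : RtoC s <> 0%C) by (intro E; injection E; lra).
  assert (E : (e1 - Defs.Cconj e2)%C = (RtoC s * X)%C).
  { unfold X. rewrite !scaled_point_eq. destruct e1, e2.
    unfold Defs.Cconj, Cconj, Cminus, Cplus, Copp, Cmult, RtoC; simpl.
    apply injective_projections; simpl; field; lra. }
  rewrite E. simpl Cpow. rewrite RtoC_inv, RtoC_mult by nra. field. split; auto.
Qed.

Lemma Rabs_weighted_Re_sub_le (s a b M B : R) (k1 k2 : C) : 0 < s ->
  Rabs a <= M -> Rabs b <= M -> Cmod k1 <= B -> Cmod k2 <= B ->
  Rabs (/ (s * s) * (a * b / 2) * (Re k1 - Re k2)) <= M * M * B / (s * s).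
Proof.
  intros Hs Ha Hb Hk1 Hk2.
  assert (Hdiff : Rabs (Re k1 - Re k2) <= 2 * B).
  { pose proof (re_le_Cmod k1). pose proof (re_le_Cmod k2).
    unfold Rminus. eapply Rle_trans; [apply Rabs_triang |]. rewrite Rabs_Ropp. lra. }
  assert (Hab : Rabs (a * b / 2) <= M * M / 2).
  { unfold Rdiv. rewrite !Rabs_mult, (Rabs_pos_eq (/ 2)) by lra.
    pose proof (Rabs_pos a). pose proof (Rabs_pos b). nra. }
  assert (Hss : 0 < / (s * s)) by (apply Rinv_0_lt_compat; nra).
  rewrite !Rabs_mult, (Rabs_pos_eq (/ (s * s))) by lra.
  replace (M * M * B / (s * s)) with (/ (s * s) * ((M * M / 2) * (2 * B))) by (field; lra).
  rewrite Rmult_assoc. apply Rmult_le_compat_l; [lra |].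
  apply Rmult_le_compat; auto using Rabs_pos.
Qed.

Lemma trace_value_sub_limit_value (x0 s M : R) (N : nat) (c : nat -> R) (eta : nat -> C) :
  -2 < x0 < 2 -> 0 < M -> 16 * M / (omega_gap x0 * omega_gap x0) <= s ->
  (forall j, (j < N)%nat ->
     Rabs (c j) <= M /\ Rabs (Re (eta j)) <= M /\ / M <= Im (eta j) <= M) ->
  Rabs (trace_value N c (/ s) (fun j => omega (scaled_point x0 s (eta j)))
        - limit_value N c eta)
  <= INR N * (INR N * (M * M * / (omega_gap x0 / 2) ^ 4)) / (s * s).
Proof.
  intros Hx HM Hs Hce. set (B := / (omega_gap x0 / 2) ^ 4).
  pose proof (omega_gap_pos x0 Hx) as HD.
  assert (Hs0 : 0 < s) by (eapply Rlt_le_trans; [| exact Hs];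
                           apply Rdiv_lt_0_compat; [lra | nra]).
  set (lam := fun j => scaled_point x0 s (eta j)).
  assert (Hlam : forall j, (j < N)%nat -> Rabs (c j) <= M /\ 0 < Im (lam j) /\
            Cmod (lam j - RtoC x0)%C <= omega_gap x0 * omega_gap x0 / 8).
  { intros j Hj. destruct (Hce j Hj) as [Hc [HRe HIm]]. split; [exact Hc |].
    apply (scaled_point_near x0 s M); auto. }
  unfold trace_value, limit_value. rewrite (fsum_scal N (- (1 / 2))), fsum_minus.
  replace (INR N * (INR N * (M * M * B)) / (s * s))
    with (INR N * (INR N * (M * M * B / (s * s)))) by (field; lra).
  apply fsum_abs_le. intros i Hi.
  rewrite (fsum_scal N (- (1 / 2))), fsum_minus. apply fsum_abs_le. intros l Hl.
  destruct (Hlam i Hi) as [Hci [Hli Hni]], (Hlam l Hl) as [Hcl [Hll Hnl]].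
  rewrite (inv_sq_sub_conj_scaled x0 s) by auto. fold (lam i) (lam l).
  pose proof (hankel_kernel_conj_bound x0 Hx (lam i) (lam l) Hli Hll Hni Hnl) as K1.
  pose proof (hankel_kernel_bound x0 Hx (lam i) (lam l) Hli Hll Hni Hnl) as K2.
  set (k1 := hankel_kernel (omega (lam i)) (Cconj (omega (lam l)))) in *.
  set (k2 := hankel_kernel (omega (lam i)) (omega (lam l))) in *.
  set (p := (/ ((lam i - Cconj (lam l)) * (lam i - Cconj (lam l))))%C) in *.
  replace (/ s * / s / 2 * (c i * c l) * (Re k1 - Re k2)
           - - (1 / 2) * (c i * c l * (/ (s * s) * Re p)))
    with (/ (s * s) * (c i * c l / 2) * (Re (k1 + p)%C - Re k2))
    by (rewrite Re_add; field; lra).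
  apply Rabs_weighted_Re_sub_le; auto.
Qed.

Lemma Rpower_INR_eventually_ge (S alpha : R) : 0 < S -> 0 < alpha ->
  exists n0 : nat, forall n, (n0 <= n)%nat -> S <= Rpower (INR n) alpha.
Proof.
  intros HS Ha. set (T := Rpower S (/ alpha)).
  assert (HT : 0 < T) by (unfold T, Rpower; apply exp_pos).
  destruct (archimed T) as [HupT _].
  assert (Hup : (0 <= up T)%Z) by (apply le_IZR; lra).
  exists (Z.to_nat (up T)). intros n Hn.
  assert (HTn : T < INR n).
  { apply le_INR in Hn. rewrite INR_IZR_INZ, Z2Nat.id in Hn by auto. lra. }
  replace S with (Rpower T alpha)
    by (unfold T; rewrite Rpower_mult, Rinv_l, Rpower_1; auto; lra).
  apply Rle_Rpower_l; lra.
Qed.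

Lemma div_sq_lt (K e s : R) : 0 <= K -> 0 < e -> K / e + 1 <= s -> K / (s * s) < e.
Proof.
  intros HK He Hs.
  assert (HKe : 0 <= K / e)
    by (unfold Rdiv; apply Rmult_le_pos; [lra | left; apply Rinv_0_lt_compat; lra]).
  assert (Hlt : K < e * s).
  { apply Rmult_lt_reg_l with (/ e); [apply Rinv_0_lt_compat; lra |].
    rewrite <- Rmult_assoc, Rinv_l, Rmult_1_l by lra. unfold Rdiv in Hs. lra. }
  apply Rle_lt_trans with (K / s).
  - unfold Rdiv. apply Rmult_le_compat_l; [lra |]. apply Rinv_le_contravar; nra.
  - apply Rmult_lt_reg_r with s; [lra |]. unfold Rdiv.
    rewrite Rmult_assoc, Rinv_l, Rmult_1_r by lra. lra.
Qed.

End HankelLimit.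

Import HankelLimit.

Theorem lemma4p6 (x0 alpha : R) :
  -2 < x0 < 2 -> 0 < alpha < 1 ->
  forall (N : nat) (M : R), 0 < M ->
  forall eps : R, 0 < eps ->
  exists n0 : nat, forall n : nat, (n0 <= n)%nat ->
  forall (c : nat -> R) (eta : nat -> Cplx),
    (forall j : nat, (j < N)%nat ->
       Rabs (c j) <= M /\ Rabs (Re (eta j)) <= M /\ / M <= Im (eta j) <= M) ->
    exists t : R,
      hankel_trace_is (phi_n x0 alpha N c eta n) t /\
      Rabs (t - limit_value N c eta) < eps.
Proof.
  intros Hx Ha N M HM eps Heps.
  pose proof (omega_gap_pos x0 Hx) as HD.
  set (K := INR N * (INR N * (M * M * / (omega_gap x0 / 2) ^ 4))).
  assert (HB : 0 < / (omega_gap x0 / 2) ^ 4) by (apply Rinv_0_lt_compat, pow_lt; lra).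
  assert (HK : 0 <= K) by (unfold K; pose proof (pos_INR N); repeat apply Rmult_le_pos; lra).
  assert (HS1 : 0 <= 16 * M / (omega_gap x0 * omega_gap x0))
    by (unfold Rdiv; apply Rmult_le_pos; [lra | left; apply Rinv_0_lt_compat; nra]).
  assert (HS2 : 0 <= K / eps)
    by (unfold Rdiv; apply Rmult_le_pos; [lra | left; apply Rinv_0_lt_compat; lra]).
  destruct (Rpower_INR_eventually_ge
              (16 * M / (omega_gap x0 * omega_gap x0) + K / eps + 1) alpha) as [n0 Hn0];
    [lra | lra |].
  exists n0. intros n Hn c eta Hce. specialize (Hn0 n Hn).
  set (s := Rpower (INR n) alpha) in Hn0.
  exists (trace_value N c (/ s) (fun j => omega (scaled_point x0 s (eta j)))). split.
  - change (phi_n x0 alpha N c eta n)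
      with (fun k => / s * fsum N (fun j => c j * a_coef (scaled_point x0 s (eta j)) k)).
    apply hankel_trace_a_combination. intros j Hj. destruct (Hce j Hj) as [_ [HRe HIm]].
    refine (proj1 (scaled_point_near x0 s M (eta j) Hx HM _ HRe HIm)). lra.
  - eapply Rle_lt_trans; [apply trace_value_sub_limit_value; auto; lra |].
    fold K. apply div_sq_lt; [exact HK | exact Heps | lra].
Qed.
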